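(* For every $x \in \mathbb{R}$ and $k \in \mathbb{Z}$, we have \[ \mathfrak{a}(x) = \mathfrak{a}(x+1), \qquad \mathfrak{b}_k(x) = \mathfrak{b}_k(x+1). \] If additionally $\alpha_k = \alpha_{-k}$ for every $k \in \mathbb{Z}$, then we also have \[ \mathfrak{a}(x) = \mathfrak{a}(0), \qquad \|\mathfrak{b}(x)\|_{\ell^2(\mathbb{Z})} = \|\mathfrak{b}(0)\|_{\ell^2(\mathbb{Z})}. \]
   Context: Setting: $\mathcal X=H^{s,p}(\mathbb{R};\mathbb{R}^n)$, $p\in[2,\infty)$, $s>1/p$. PDE $\mathrm{d}u=Au\,\mathrm{d}t+f(u)\,\mathrm{d}t$ with $A$ generating a translation-commuting $C_0$-semigroup, $f$ smooth as a Nemytskii map on $\mathcal X$; stable traveling pulse $u^*(x-ct)$. $\mathcal T_xf=f(\cdot-x)$. The isochron map $\pi_{\mathrm{iso}}$ (upright $\pi$ in the paper, not the circle constant) is defined near $\{\mathcal T_xu^*\}$ by $\lim_{t\to\infty}\|u^v(t)-u^*(\cdot-ct-\pi_{\mathrm{iso}}(v))\|_{\mathcal X}=0$; it satisfies $\pi_{\mathrm{iso}}(\mathcal T_xu)=x+\pi_{\mathrm{iso}}(u)$, hence $\pi_{\mathrm{iso}}'(\mathcal T_xu)[v]=\pi_{\mathrm{iso}}'(u)[\mathcal T_{-x}v]$ and $\pi_{\mathrm{iso}}''(\mathcal T_xu)[v,w]=\pi_{\mathrm{iso}}''(u)[\mathcal T_{-x}v,\mathcal T_{-x}w]$, and $\pi_{\mathrm{iso}}'(u^*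 )[v]=\langle\psi,v\rangle$ where $\psi$ is the bounded functional with $\Pi^cf=-\langle\psi,f\rangle\partial_xu^*$ ($\Pi^c$ the spectral projection of $\mathcal L=A+c\partial_x+f'(u^* )$ onto $\mathrm{span}\{\partial_xu^*\}$). Noise basis $e_k(x)=\sqrt2\cos(2\pi kx)$ ($k>0$), $e_0=1$, $e_k(x)=\sqrt2\sin(2\pi kx)$ ($k<0$), coefficients $\alpha_k$, nonlinearity $g$. Define $\mathfrak a(x)=\tfrac12\sum_k\alpha_k^2\big(\pi_{\mathrm{iso}}'(\mathcal T_xu^* )[g'(\mathcal T_xu^* )g(\mathcal T_xu^* )e_k^2]+\pi_{\mathrm{iso}}''(\mathcal T_xu^* )[g(\mathcal T_xu^* )e_k,g(\mathcal T_xu^* )e_k]\big)$, $\mathfrak b_k(x)=\alpha_k\pi_{\mathrm{iso}}'(\mathcal T_xu^* )[g(\mathcal T_xu^* )e_k]$, and $\mathfrak b(x)=(\mathfrak b_k(x))_{k\in\mathbb{Z}}$. *)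

From HB Require Import structures.
From mathcomp Require Import all_boot all_order all_algebra.
From mathcomp Require Import all_classical all_reals all_analysis.
Set Implicit Arguments. Unset Strict Implicit. Unset Printing Implicit Defensive.
Import Order.TTheory GRing.Theory Num.Theory.
Import numFieldNormedType.Exports.
Local Open Scope ring_scope.

Section Defs.
Variables (R : realType) (n : nat).
Local Notation V := 'rV[R]_n.
Local Notation Fn := (R -> V).

Definition transl (x : R) (f : Fn) : Fn := fun y => f (y - x).

Definition ebasis (k : int) (y : R) : R :=
  if (0 < k)%R then Num.sqrt 2 * cos (2 * pi * k%:~R * y)
  else if k == 0 then 1
  else Num.sqrt 2 * sin (2 * pi * k%:~R * y).

Definition symsum (F : int -> R) (N : nat) : R :=
  F 0 + \sum_(1 <= k < N.+1) (F k%:Z + F (- k%:Z)).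

Definition zsum (F : int -> R) : R := limn (symsum F).

(* l^2(Z) norm, in the extended reals (+oo if not square summable) *)
Definition l2norm (b : int -> R) : \bar R :=
  limn (fun N => (Num.sqrt (symsum (fun k => b k ^+ 2) N))%:E).

(* frak a(x); Dpi u v = pi_iso'(u)[v], Dpi2 u v w = pi_iso''(u)[v,w],
   g'(u)g(u) taken pointwise via the differential 'd g. *)
Definition frak_a (ustar : Fn) (g : V -> V) (alpha : int -> R)
  (Dpi : Fn -> Fn -> R) (Dpi2 : Fn -> Fn -> Fn -> R) (x : R) : R :=
  2^-1 * zsum (fun k => alpha k ^+ 2 *
    (Dpi (transl x ustar)
        (fun y => (ebasis k y) ^+ 2 *:
           ('d g (transl x ustar y) (g (transl x ustar y))))
     + Dpi2 (transl x ustar)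
        (fun y => ebasis k y *: g (transl x ustar y))
        (fun y => ebasis k y *: g (transl x ustar y)))).

Definition frak_b (ustar : Fn) (g : V -> V) (alpha : int -> R)
  (Dpi : Fn -> Fn -> R) (k : int) (x : R) : R :=
  alpha k * Dpi (transl x ustar) (fun y => ebasis k y *: g (transl x ustar y)).

Definition lin_subspace (inX : Fn -> Prop) : Prop :=
  inX (fun _ => 0) /\
  forall (a : R) v w, inX v -> inX w -> inX (fun y => a *: v y + w y).

Definition isochron_derivs (inX : Fn -> Prop) (ustar : Fn)
  (Dpi : Fn -> Fn -> R) (Dpi2 : Fn -> Fn -> Fn -> R) : Prop :=
  [/\ forall x (a : R) v w, inX v -> inX w ->
        Dpi (transl x ustar) (fun y => a *: v y + w y)
        = a * Dpi (transl x ustar) v + Dpi (transl x ustar) w,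
      forall x (a : R) v w z, inX v -> inX w -> inX z ->
        Dpi2 (transl x ustar) (fun y => a *: v y + w y) z
        = a * Dpi2 (transl x ustar) v z + Dpi2 (transl x ustar) w z,
      forall x (a : R) v w z, inX v -> inX w -> inX z ->
        Dpi2 (transl x ustar) z (fun y => a *: v y + w y)
        = a * Dpi2 (transl x ustar) z v + Dpi2 (transl x ustar) z w,
      forall x v, inX v ->
        Dpi (transl x ustar) v = Dpi ustar (transl (- x) v)
    & forall x v w, inX v -> inX w ->
        Dpi2 (transl x ustar) v w
        = Dpi2 ustar (transl (- x) v) (transl (- x) w)].

End Defs.

From HB Require Import structures.
From mathcomp Require Import all_boot all_order all_algebra.
From mathcomp Require Import all_classical all_reals all_analysis.
From mathcomp Require Import ring.
Import Order.TTheory GRing.Theory Num.Theory.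
Import numFieldNormedType.Exports.
Local Open Scope ring_scope.

(* By equivariance, pi' and pi'' at T_x ustar applied to the noise
   directions e_k g(T_x ustar) equal pi' and pi'' at ustar applied to
   e_k(. + x) g(ustar); since e_k is 1-periodic, a and b_k are 1-periodic.
   For k > 0 the translated pair (e_k, e_-k)(. + x) is the rotation of
   (e_k, e_-k) by the angle 2 pi k x, and e_k^2 + e_-k^2 = 2.  Hence, when
   alpha_k = alpha_-k, the joint contribution of k and -k to a, and to
   |b|^2 (a quadratic form in the pair), does not depend on x, and neither
   do the symmetric partial sums defining the series over Z. *)

Set Implicit Arguments. Unset Strict Implicit.

Lemma periodicz (U V : zmodType) (f : U -> V) (T : U) :
  periodic f T -> forall (k : int) (a : U), f (a + T *~ k) = f a.
Proof.
move=> fT [m|m] a; first exact: periodicn.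
by rewrite NegzE mulrNz -[in RHS](subrK (T *+ m.+1) a) periodicn.
Qed.

Lemma symsum_pair_eq (R : realType) (F G : int -> R) :
  F 0 = G 0 ->
  (forall m : nat, F (m.+1)%:Z + F (- (m.+1)%:Z) = G (m.+1)%:Z + G (- (m.+1)%:Z)) ->
  symsum F =1 symsum G.
Proof.
move=> FG0 FGpair N; rewrite /symsum FG0; congr (_ + _).
by apply: eq_big_nat => -[|m] //= _; exact: FGpair.
Qed.

Section NoiseBasis.
Variable R : realType.
Implicit Types (x y : R) (k : int) (m : nat).

Local Notation angle m x := (2 * pi * (m.+1)%:R * x).

Lemma ebasis0 y : ebasis 0 y = 1 :> R.
Proof. by rewrite /ebasis ltxx eqxx. Qed.

Lemma ebasisD1 k y : ebasis k (y + 1) = ebasis k y :> R.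
Proof.
rewrite /ebasis mulrDr mulr1 [2 * pi]mulr_natl mulrzr.
by rewrite (periodicz (@cosD2pi R)) (periodicz (@sinD2pi R)).
Qed.

Lemma ebasis_pos m y :
  ebasis (m.+1)%:Z y = Num.sqrt 2 * cos (2 * pi * (m.+1)%:R * y) :> R.
Proof. by []. Qed.

Lemma ebasis_neg m y :
  ebasis (- (m.+1)%:Z) y = - (Num.sqrt 2 * sin (2 * pi * (m.+1)%:R * y)) :> R.
Proof. by rewrite /ebasis /= mulrNz mulrN mulNr sinN mulrN. Qed.

Lemma ebasisD_pos m x y :
  ebasis (m.+1)%:Z (y + x)
  = cos (angle m x) * ebasis (m.+1)%:Z y + sin (angle m x) * ebasis (- (m.+1)%:Z) y.
Proof. by rewrite !ebasis_pos ebasis_neg mulrDr cosD; ring. Qed.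

Lemma ebasisD_neg m x y :
  ebasis (- (m.+1)%:Z) (y + x)
  = cos (angle m x) * ebasis (- (m.+1)%:Z) y - sin (angle m x) * ebasis (m.+1)%:Z y.
Proof. by rewrite !ebasis_neg ebasis_pos mulrDr sinD; ring. Qed.

Lemma ebasis_sqrD m y :
  ebasis (m.+1)%:Z y ^+ 2 + ebasis (- (m.+1)%:Z) y ^+ 2 = 2 :> R.
Proof.
rewrite ebasis_pos ebasis_neg sqrrN !exprMn sqr_sqrtr ?ler0n //.
by rewrite -mulrDr cos2Dsin2 mulr1.
Qed.

End NoiseBasis.

Section LinearOnSubspace.
Variables (R : comPzRingType) (T : Type) (V : lmodType R).
Variable inX : (T -> V) -> Prop.
Hypothesis inX0 : inX (fun _ => 0).
Hypothesis inX_comb :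
  forall a v w, inX v -> inX w -> inX (fun y => a *: v y + w y).

Definition linear_on (P : (T -> V) -> R) :=
  forall a v w, inX v -> inX w -> P (fun y => a *: v y + w y) = a * P v + P w.

Definition bilinear_on (Q : (T -> V) -> (T -> V) -> R) :=
  forall z, inX z -> linear_on (Q^~ z) /\ linear_on (Q z).

Lemma inXZ a v : inX v -> inX (fun y => a *: v y).
Proof.
move=> Xv; suff -> : (fun y => a *: v y) = (fun y => a *: v y + 0) by exact: inX_comb.
by apply/funext => y; rewrite addr0.
Qed.

Lemma inX_comb2 c s a b :
  inX a -> inX b -> inX (fun y => c *: a y + s *: b y).
Proof. by move=> Xa Xb; apply: inX_comb => //; exact: inXZ. Qed.

Section Linear.
Variable P : (T -> V) -> R.
Hypothesis linP : linear_on P.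

Lemma linear_on0 : P (fun _ => 0) = 0.
Proof.
have /= := linP 1 inX0 inX0.
by rewrite scaler0 addr0 mul1r -{1}[P _]addr0 => /addrI <-.
Qed.

Lemma linear_onZ a v : inX v -> P (fun y => a *: v y) = a * P v.
Proof.
move=> Xv; rewrite -[RHS]addr0 -linear_on0 -linP //.
by congr P; apply/funext => y; rewrite addr0.
Qed.

Lemma linear_onD v w : inX v -> inX w -> P (fun y => v y + w y) = P v + P w.
Proof.
move=> Xv Xw; rewrite -[P v]mul1r -linP //.
by congr P; apply/funext => y; rewrite scale1r.
Qed.

Lemma linear_on_comb2 c s a b : inX a -> inX b ->
  P (fun y => c *: a y + s *: b y) = c * P a + s * P b.
Proof. by move=> Xa Xb; rewrite linP ?linear_onZ //; exact: inXZ. Qed.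

Lemma linear_on_rotation c s a b : inX a -> inX b ->
  P (fun y => c *: a y + s *: b y) ^+ 2 + P (fun y => c *: b y + (- s) *: a y) ^+ 2
  = (c ^+ 2 + s ^+ 2) * (P a ^+ 2 + P b ^+ 2).
Proof. by move=> Xa Xb; rewrite !linear_on_comb2 //; ring. Qed.

End Linear.

Lemma bilinear_on_comb2 Q c s a b : bilinear_on Q -> inX a -> inX b ->
  Q (fun y => c *: a y + s *: b y) (fun y => c *: a y + s *: b y)
  = c ^+ 2 * Q a a + c * s * (Q a b + Q b a) + s ^+ 2 * Q b b.
Proof.
move=> bilQ Xa Xb.
have [lQa _] := bilQ _ Xa; have [lQb _] := bilQ _ Xb.
rewrite (linear_on_comb2 (bilQ _ (inX_comb2 c s Xa Xb)).2) //.
rewrite (linear_on_comb2 lQa) // (linear_on_comb2 lQb) //.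
ring.
Qed.

Lemma bilinear_on_rotation Q c s a b : bilinear_on Q -> inX a -> inX b ->
  Q (fun y => c *: a y + s *: b y) (fun y => c *: a y + s *: b y)
  + Q (fun y => c *: b y + (- s) *: a y) (fun y => c *: b y + (- s) *: a y)
  = (c ^+ 2 + s ^+ 2) * (Q a a + Q b b).
Proof. by move=> bilQ Xa Xb; rewrite !bilinear_on_comb2 //; ring. Qed.

End LinearOnSubspace.

Section Isochron.
Variables (R : realType) (n : nat).
Local Notation V := 'rV[R]_n.
Variables (inX : (R -> V) -> Prop) (ustar : R -> V) (g : V -> V) (alpha : int -> R).
Variables (Dpi : (R -> V) -> (R -> V) -> R)
  (Dpi2 : (R -> V) -> (R -> V) -> (R -> V) -> R).

Local Notation noise k := (fun y => ebasis k y *: g (ustar y)).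
Local Notation dg_ustar := (fun y => 'd g (ustar y) (g (ustar y))).
Local Notation dg := (fun v => 'd g v (g v)).
Local Notation drift x k :=
  (fun y => ebasis k y ^+ 2 *: 'd g (transl x ustar y) (g (transl x ustar y))).
Local Notation angle m x := (2 * pi * (m.+1)%:R * x).

Hypothesis HX : lin_subspace inX.
Hypothesis Hpi : isochron_derivs inX ustar Dpi Dpi2.
Hypothesis Hg : forall x k, inX (fun y => ebasis k y *: g (transl x ustar y)).
Hypothesis Hgg : forall x k, inX (drift x k).

Let X0 : inX (fun _ => 0) := proj1 HX.
Let Xcomb : forall a v w, inX v -> inX w -> inX (fun y => a *: v y + w y) := proj2 HX.

Local Notation a := (frak_a ustar g alpha Dpi Dpi2).
Local Notation b k := (frak_b ustar g alpha Dpi k).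

Lemma transl0 (f : R -> V) : transl 0 f = f.
Proof. by apply/funext => y; rewrite /transl subr0. Qed.

Lemma Dpi_linear x : linear_on inX (Dpi (transl x ustar)).
Proof. by case: Hpi => lin _ _ _ _; exact: lin. Qed.

Lemma Dpi2_bilinear x : bilinear_on inX (Dpi2 (transl x ustar)).
Proof. by case: Hpi => _ lin1 lin2 _ _ z Xz; split=> ? ? ? ? ?; [exact: lin1 | exact: lin2]. Qed.

Lemma Dpi_transl x (c : R -> R) (h : V -> V) :
  inX (fun y => c y *: h (transl x ustar y)) ->
  Dpi (transl x ustar) (fun y => c y *: h (transl x ustar y))
  = Dpi ustar (fun y => c (y + x) *: h (ustar y)).
Proof.
case: Hpi => _ _ _ equiv _ Xv; rewrite equiv //.
by congr Dpi; apply/funext => y; rewrite /transl opprK addrK.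
Qed.

Lemma Dpi2_transl x (c : R -> R) (h : V -> V) :
  inX (fun y => c y *: h (transl x ustar y)) ->
  Dpi2 (transl x ustar) (fun y => c y *: h (transl x ustar y))
    (fun y => c y *: h (transl x ustar y))
  = Dpi2 ustar (fun y => c (y + x) *: h (ustar y)) (fun y => c (y + x) *: h (ustar y)).
Proof.
case: Hpi => _ _ _ _ equiv2 Xv; rewrite equiv2 //.
by congr Dpi2; apply/funext => y; rewrite /transl opprK addrK.
Qed.

Lemma noise_in k : inX (noise k).
Proof. by have := Hg 0 k; rewrite transl0. Qed.

Lemma noiseD_pos m x :
  (fun y => ebasis (m.+1)%:Z (y + x) *: g (ustar y))
  = (fun y => cos (angle m x) *: noise (m.+1)%:Z y
              + sin (angle m x) *: noise (- (m.+1)%:Z) y).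
Proof. by apply/funext => y; rewrite ebasisD_pos scalerDl !scalerA. Qed.

Lemma noiseD_neg m x :
  (fun y => ebasis (- (m.+1)%:Z) (y + x) *: g (ustar y))
  = (fun y => cos (angle m x) *: noise (- (m.+1)%:Z) y
              + (- sin (angle m x)) *: noise (m.+1)%:Z y).
Proof. by apply/funext => y; rewrite ebasisD_neg -mulNr scalerDl !scalerA. Qed.

Lemma frak_bE k x :
  b k x = alpha k * Dpi ustar (fun y => ebasis k (y + x) *: g (ustar y)).
Proof. by rewrite /frak_b (Dpi_transl (Hg x k)). Qed.

Lemma frak_b_periodic k x : b k (x + 1) = b k x.
Proof.
rewrite !frak_bE; congr (_ * Dpi _ _).
by apply/funext => y; rewrite addrA ebasisD1.
Qed.

Lemma frak_b0 x : b 0 x = b 0 0.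
Proof. by rewrite !frak_bE; congr (_ * Dpi _ _); apply/funext => y; rewrite !ebasis0. Qed.

Lemma frak_b_sqrD_pair (alphaN : forall k, alpha k = alpha (- k)) m x :
  b (m.+1)%:Z x ^+ 2 + b (- (m.+1)%:Z) x ^+ 2
  = alpha (m.+1)%:Z ^+ 2
    * (Dpi ustar (noise (m.+1)%:Z) ^+ 2 + Dpi ustar (noise (- (m.+1)%:Z)) ^+ 2).
Proof.
have linDpi : linear_on inX (Dpi ustar) by rewrite -[ustar]transl0; exact: Dpi_linear.
rewrite !frak_bE noiseD_pos noiseD_neg -alphaN !exprMn -mulrDr.
by rewrite (linear_on_rotation X0 Xcomb linDpi _ _ (noise_in _) (noise_in _)) cos2Dsin2 mul1r.
Qed.

Lemma l2norm_frak_b_invariant (alphaN : forall k, alpha k = alpha (- k)) x :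
  l2norm (fun k => b k x) = l2norm (fun k => b k 0).
Proof.
rewrite /l2norm; congr (limn _); apply/funext => N; congr ((Num.sqrt _)%:E).
by apply: symsum_pair_eq => [|m] /=; rewrite ?frak_b0 ?frak_b_sqrD_pair.
Qed.

Definition frak_a_summand x k := alpha k ^+ 2 *
  (Dpi (transl x ustar) (drift x k)
   + Dpi2 (transl x ustar) (fun y => ebasis k y *: g (transl x ustar y))
       (fun y => ebasis k y *: g (transl x ustar y))).

Lemma frak_aE x : a x = 2^-1 * zsum (frak_a_summand x).
Proof. by []. Qed.

Lemma frak_a_periodic x : a (x + 1) = a x.
Proof.
rewrite !frak_aE; congr (_ * zsum _); apply/funext => k; rewrite /frak_a_summand.
rewrite (Dpi_transl (h := dg) (Hgg x k)) (Dpi_transl (h := dg) (Hgg (x + 1) k)).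
rewrite (Dpi2_transl (Hg x k)) (Dpi2_transl (Hg (x + 1) k)).
by congr (_ * (Dpi _ _ + Dpi2 _ _ _)); apply/funext => y; rewrite addrA ebasisD1.
Qed.

Lemma frak_a_summand0 x : frak_a_summand x 0 = frak_a_summand 0 0.
Proof.
rewrite /frak_a_summand.
rewrite (Dpi_transl (h := dg) (Hgg x 0)) (Dpi_transl (h := dg) (Hgg 0 0)).
rewrite (Dpi2_transl (Hg x 0)) (Dpi2_transl (Hg 0 0)).
by congr (_ * (Dpi _ _ + Dpi2 _ _ _)); apply/funext => y; rewrite !ebasis0.
Qed.

(* Linearity is applied at T_x ustar, where the directions are known to lie
   in X; there e_k^2 + e_-k^2 = 2 e_0^2, and e_0 = 1 is translation invariant. *)
Lemma drift_pair x m :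
  Dpi (transl x ustar) (drift x (m.+1)%:Z) + Dpi (transl x ustar) (drift x (- (m.+1)%:Z))
  = 2 * Dpi ustar dg_ustar.
Proof.
rewrite -(linear_onD (Dpi_linear x)) ?Hgg //.
transitivity (Dpi (transl x ustar) (fun y => 2 *: drift x 0 y)).
  by congr Dpi; apply/funext => y; rewrite -scalerDl ebasis_sqrD ebasis0 expr1n scale1r.
rewrite (linear_onZ X0 (Dpi_linear x)) ?Hgg // (Dpi_transl (h := dg) (Hgg x 0)).
by congr (_ * Dpi _ _); apply/funext => y; rewrite ebasis0 expr1n scale1r.
Qed.

Lemma frak_a_summand_pair (alphaN : forall k, alpha k = alpha (- k)) x m :
  frak_a_summand x (m.+1)%:Z + frak_a_summand x (- (m.+1)%:Z)
  = alpha (m.+1)%:Z ^+ 2 * (2 * Dpi ustar dg_ustar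
      + (Dpi2 ustar (noise (m.+1)%:Z) (noise (m.+1)%:Z)
         + Dpi2 ustar (noise (- (m.+1)%:Z)) (noise (- (m.+1)%:Z)))).
Proof.
have bilDpi2 : bilinear_on inX (Dpi2 ustar).
  by rewrite -[ustar]transl0; exact: Dpi2_bilinear.
rewrite /frak_a_summand -alphaN -mulrDr addrACA drift_pair.
rewrite (Dpi2_transl (Hg x _)) (Dpi2_transl (Hg x _)) noiseD_pos noiseD_neg.
by rewrite (bilinear_on_rotation X0 Xcomb _ _ bilDpi2 (noise_in _) (noise_in _)) cos2Dsin2 mul1r.
Qed.

Lemma frak_a_invariant (alphaN : forall k, alpha k = alpha (- k)) x : a x = a 0.
Proof.
rewrite !frak_aE /zsum; congr (_ * _); congr (limn _); apply/funext.
apply: symsum_pair_eq => [|m]; first exact: frak_a_summand0.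
by rewrite !frak_a_summand_pair.
Qed.

End Isochron.

Theorem proposition4p4 (R : realType) (n : nat)
  (inX : (R -> 'rV[R]_n) -> Prop) (ustar : R -> 'rV[R]_n)
  (g : 'rV[R]_n -> 'rV[R]_n) (alpha : int -> R)
  (Dpi : (R -> 'rV[R]_n) -> (R -> 'rV[R]_n) -> R)
  (Dpi2 : (R -> 'rV[R]_n) -> (R -> 'rV[R]_n) -> (R -> 'rV[R]_n) -> R)
  (HX : lin_subspace inX)
  (Hpi : isochron_derivs inX ustar Dpi Dpi2)
  (Hg : forall (x : R) (k : int),
     inX (fun y => ebasis k y *: g (transl x ustar y)))
  (Hgg : forall (x : R) (k : int),
     inX (fun y => (ebasis k y) ^+ 2 *:
            ('d g (transl x ustar y) (g (transl x ustar y))))) :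
  (forall (x : R) (k : int),
     frak_a ustar g alpha Dpi Dpi2 x = frak_a ustar g alpha Dpi Dpi2 (x + 1) /\
     frak_b ustar g alpha Dpi k x = frak_b ustar g alpha Dpi k (x + 1)) /\
  ((forall k : int, alpha k = alpha (- k)) ->
   forall x : R,
     frak_a ustar g alpha Dpi Dpi2 x = frak_a ustar g alpha Dpi Dpi2 0 /\
     l2norm (fun k => frak_b ustar g alpha Dpi k x)
     = l2norm (fun k => frak_b ustar g alpha Dpi k 0)).
Proof.
split=> [x k | alphaN x].
  by rewrite (frak_a_periodic _ Hpi Hg Hgg) (frak_b_periodic _ Hpi Hg).
by rewrite (frak_a_invariant HX Hpi Hg Hgg alphaN) (l2norm_frak_b_invariant HX Hpi Hg alphaN).
Qed.
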